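(* Let $\|w\|_{L^\infty(\Omega)}\le\bar c_0\le\bar v/\sqrt5$, $\|w_x\|_{L^\infty(\Omega)}\le\bar c_1$, $\|w_{xx}\|_{L^\infty(\Omega)}\le\bar c_2$, and $\underline v^2:=\bar v^2-\bar c_0^2$. Then for any $\xi\in X$ and directions $\delta\xi,\widetilde{\delta\xi}\in\delta X$, the second directional derivative of $f$ satisfies (pointwise in $\tau$) $$|f''(\xi,\xi_\tau)[\delta\xi,\delta\xi_\tau][\widetilde{\delta\xi},\widetilde{\delta\xi}_\tau]|\le\bar\beta_0\|\xi_\tau\|\|\delta\xi\|\|\widetilde{\delta\xi}\|+\bar\beta_1\big(\|\delta\xi\|\|\widetilde{\delta\xi}_\tau\|+\|\delta\xi_\tau\|\|\widetilde{\delta\xi}\|\big)+\bar\beta_2\|\xi_\tau\|^{-1}\|\delta\xi_\tau\|\|\widetilde{\delta\xi}_\tau\|$$ with $\bar\beta_0=14\frac{\bar c_1^2}{\underline v^3}+4\frac{\bar c_2}{\underline v^2}$, $\bar\beta_1=7\frac{\bar c_1}{\underline v^2}$, $\bar\beta_2=\frac{4}{\underline v}$.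
   Context: Fix $\bar v>0$, $x_O\ne x_D\in\mathbb R^2$, and $w\in C^3(\mathbb R^2,\mathbb R^2)$ with $\|w(x)\|<\bar v$; $w_x,w_{xx}$ are its derivatives in operator norm; $\Omega\subset\mathbb R^2$ is an ellipse with foci $x_O,x_D$ containing every globally optimal trajectory, and $\|g\|_{L^\infty(\Omega)}$ is the essential supremum of the pointwise norm over $\Omega$. $f(x,p)=\frac{-p^Tw(x)+\sqrt{(p^Tw(x))^2+(\bar v^2-w(x)^Tw(x))p^Tp}}{\bar v^2-w(x)^Tw(x)}$; $f''(\xi,\xi_\tau)[\cdot][\cdot]$ is the second derivative of $f$ w.r.t. $(x,p)$ at $(\xi(\tau),\xi_\tau(\tau))$ applied to the directions $(\delta\xi(\tau),\delta\xi_\tau(\tau))$ and $(\widetilde{\delta\xi}(\tau),\widetilde{\delta\xi}_\tau(\tau))$. $X=\{\xi\in W^{1,\infty}(]0,1[,\mathbb R^2):\xi(0)=x_O,\xi(1)=x_D\}$, $\delta X=W_0^{1,\infty}(]0,1[,\mathbb R^2)$, subscript $\tau$ = derivative; $\|\cdot\|$ Euclidean norm. *)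

From Stdlib Require Import Reals.
From Coquelicot Require Import Coquelicot.
Open Scope R_scope.

Definition vec := (R * R)%type.
Definition vadd (a b : vec) : vec := (fst a + fst b, snd a + snd b).
Definition vsub (a b : vec) : vec := (fst a - fst b, snd a - snd b).
Definition vscal (s : R) (a : vec) : vec := (s * fst a, s * snd a).
Definition dot (a b : vec) : R := fst a * fst b + snd a * snd b.
Definition vnorm (a : vec) : R := sqrt (dot a a).

Definition pd1 (g : R -> R -> R) : R -> R -> R :=
  fun x y => Derive (fun t => g t y) x.
Definition pd2 (g : R -> R -> R) : R -> R -> R :=
  fun x y => Derive (fun t => g x t) y.

Fixpoint Ck (k : nat) (g : R -> R -> R) : Prop :=
  match k with
  | O => forall z : R * R, continuous (fun z : R * R => g (fst z) (snd z)) z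
  | S k' =>
      (forall x y, ex_derive (fun t => g t y) x /\ ex_derive (fun t => g x t) y)
      /\ Ck k' g /\ Ck k' (pd1 g) /\ Ck k' (pd2 g)
  end.

Definition C3field (w : vec -> vec) : Prop :=
  Ck 3 (fun x y => fst (w (x, y))) /\ Ck 3 (fun x y => snd (w (x, y))).

Definition Dcurve (g : R -> vec) : vec :=
  (Derive (fun t => fst (g t)) 0, Derive (fun t => snd (g t)) 0).

Definition Dw (w : vec -> vec) (x h : vec) : vec :=
  Dcurve (fun t => w (vadd x (vscal t h))).
Definition D2w (w : vec -> vec) (x h k : vec) : vec :=
  Dcurve (fun s => Dw w (vadd x (vscal s k)) h).

Definition fcost (vbar : R) (w : vec -> vec) (x p : vec) : R :=
  let a := dot p (w x) in
  let d := vbar ^ 2 - dot (w x) (w x) in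
  (- a + sqrt (a ^ 2 + d * dot p p)) / d.

Definition D2f (vbar : R) (w : vec -> vec) (x p u u' v v' : vec) : R :=
  Derive (fun s =>
    Derive (fun t =>
      fcost vbar w (vadd x (vadd (vscal s u) (vscal t v)))
                   (vadd p (vadd (vscal s u') (vscal t v')))) 0) 0.

Definition ellipse (xO xD : vec) (a : R) (x : vec) : Prop :=
  vnorm (vsub x xO) + vnorm (vsub x xD) < 2 * a.

From Stdlib Require Import Reals Lra.
From Coquelicot Require Import Coquelicot.
Open Scope R_scope.

(* Write T = f(x,p), W = w(x) and E = p - T W. Then T > 0 is characterised by
   |E| = V T. Differentiating this identity gives f' = E.(h' - T w_x h) / D with
   D = E.W + V^2 T >= V T (V - c0), and differentiating once more gives a closed
   formula for f''. Its principal part is a quadratic form in the two directions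
   which, multiplied by |E|^2, factors by Lagrange's identity into two cross
   products, each at most (V / vl) |E| |g|. The remaining terms are bounded by
   Cauchy-Schwarz with |w_x| <= c1 and |w_xx| <= c2. Finally
   T (V - c0) <= |p| <= T (V + c0) turns powers of T into powers of |p|, and
   c0 <= V / sqrt 5 yields the numerical constants. *)

(** * Plane vectors *)

Definition cross (a b : vec) : R := fst a * snd b - snd a * fst b.

Lemma dot_ge0 a : 0 <= dot a a.
Proof. unfold dot; nra. Qed.

Lemma dot_gt0 a : a <> (0, 0) -> 0 < dot a a.
Proof.
  destruct a as [a1 a2]; unfold dot; simpl; intros Ha.
  destruct (Req_dec a1 0), (Req_dec a2 0); subst; [congruence|nra..].
Qed.

Lemma vnorm_ge0 a : 0 <= vnorm a.
Proof. apply sqrt_pos. Qed.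

Lemma vnorm_sq a : vnorm a * vnorm a = dot a a.
Proof. apply sqrt_sqrt, dot_ge0. Qed.

Lemma dot_lt_sq_of_vnorm_lt a V : vnorm a < V -> dot a a < V ^ 2.
Proof. intros H. rewrite <- vnorm_sq. pose proof (vnorm_ge0 a). nra. Qed.

Lemma vnorm_scal t a : vnorm (vscal t a) = Rabs t * vnorm a.
Proof.
  unfold vnorm. rewrite <- sqrt_Rsqr_abs, <- sqrt_mult_alt by apply Rle_0_sqr.
  f_equal. unfold dot, vscal, Rsqr; simpl; ring.
Qed.

Lemma lagrange_identity a b c : dot a b * dot a c + cross a b * cross a c = dot a a * dot b c.
Proof. unfold dot, cross; ring. Qed.

Lemma Rabs_le_of_sq a b : 0 <= b -> a * a <= b * b -> Rabs a <= b.
Proof. intros Hb H. rewrite <- (Rabs_pos_eq b Hb). apply Rsqr_le_abs_0, H. Qed.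

Lemma Rabs_dot_le a b : Rabs (dot a b) <= vnorm a * vnorm b.
Proof.
  apply Rabs_le_of_sq; [apply Rmult_le_pos; apply vnorm_ge0|].
  pose proof (lagrange_identity a b b).
  pose proof (vnorm_sq a). pose proof (vnorm_sq b).
  nra.
Qed.

Lemma vnorm_add_le a b : vnorm (vadd a b) <= vnorm a + vnorm b.
Proof.
  rewrite <- (Rabs_pos_eq (vnorm (vadd a b))) by apply vnorm_ge0.
  pose proof (vnorm_ge0 a). pose proof (vnorm_ge0 b).
  apply Rabs_le_of_sq; [lra|].
  pose proof (Rle_abs (dot a b)). pose proof (Rabs_dot_le a b).
  pose proof (vnorm_sq a). pose proof (vnorm_sq b). pose proof (vnorm_sq (vadd a b)).
  assert (dot (vadd a b) (vadd a b) = dot a a + 2 * dot a b + dot b b)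
    by (unfold dot, vadd; simpl; ring).
  nra.
Qed.

Lemma vnorm_sub_le a b : vnorm (vsub a b) <= vnorm a + vnorm b.
Proof.
  replace (vsub a b) with (vadd a (vscal (-1) b))
    by (unfold vsub, vadd, vscal; simpl; f_equal; ring).
  rewrite <- (Rmult_1_l (vnorm b)), <- Rabs_R1, <- Rabs_Ropp, <- vnorm_scal.
  apply vnorm_add_le.
Qed.

Lemma vnorm_sub_scal_le g T' A a :
  0 <= T' -> vnorm A <= a -> vnorm (vsub g (vscal T' A)) <= vnorm g + T' * a.
Proof.
  intros HT HA. eapply Rle_trans; [apply vnorm_sub_le|].
  rewrite vnorm_scal, Rabs_pos_eq by exact HT.
  pose proof (Rmult_le_compat_l _ _ _ HT HA). lra.
Qed.

Lemma vadd_scal0 y h : vadd y (vscal 0 h) = y.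
Proof. destruct y; unfold vadd, vscal; simpl; f_equal; ring. Qed.

Lemma vadd_assoc x a b : vadd x (vadd a b) = vadd (vadd x a) b.
Proof. unfold vadd; simpl; f_equal; ring. Qed.

(** * Smoothness of the wind *)

Lemma Ck_ex_diff_n k : forall g, Ck k g -> forall x y, ex_diff_n g k x y.
Proof.
  induction k as [|k IH]; intros g Hg x y.
  - split; [apply continuity_2d_pt_filterlim, (Hg (x, y)) | exact I].
  - destruct Hg as [Hd [Hg [H1 H2]]].
    assert (Hcont : continuity_2d_pt g x y) by (destruct k; exact (proj1 (IH g Hg x y))).
    destruct (Hd x y) as [Hdx Hdy].
    exact (conj Hcont (conj Hdx (conj Hdy (conj (IH _ H1 x y) (IH _ H2 x y))))).
Qed.

(* Continuous second partials make the first-order Taylor remainder O(|(u,v) - (x,y)|^2). *)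
Lemma Ck2_differentiable g x y : Ck 2 g ->
  differentiable_pt_lim g x y (pd1 g x y) (pd2 g x y).
Proof.
  intros Hg eps.
  assert (Hdiff : locally_2d (fun u v => ex_diff_n g 2 u v) x y).
  { exists (mkposreal 1 Rlt_0_1). intros; apply Ck_ex_diff_n, Hg. }
  destruct (Taylor_Lagrange_2d g 1 x y Hdiff) as [D [d Hd]].
  assert (Hdelta : 0 < Rmin d (eps / (Rabs D + 1))).
  { apply Rmin_pos; [apply cond_pos|].
    apply Rdiv_lt_0_compat; [apply cond_pos|pose proof (Rabs_pos D); lra]. }
  exists (mkposreal _ Hdelta). intros u v Hu Hv; simpl in Hu, Hv.
  assert (Hrem := Hd u v (Rlt_le_trans _ _ _ Hu (Rmin_l _ _)) (Rlt_le_trans _ _ _ Hv (Rmin_l _ _))).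
  replace (DL_pol 1 g x y (u - x) (v - y))
    with (g x y + (pd1 g x y * (u - x) + pd2 g x y * (v - y))) in Hrem
    by (unfold DL_pol, differential, pd1, pd2, Binomial.C, partial_derive; simpl; field).
  set (M := Rmax (Rabs (u - x)) (Rabs (v - y))) in *.
  assert (HM : 0 <= M) by (apply Rle_trans with (Rabs (u - x)); [apply Rabs_pos|apply Rmax_l]).
  assert (HMeps : (Rabs D + 1) * M <= eps).
  { assert (HM' : M < eps / (Rabs D + 1)).
    { apply Rmax_lub_lt; eapply Rlt_le_trans; eauto using Rmin_r. }
    pose proof (Rabs_pos D).
    apply (Rmult_lt_compat_l (Rabs D + 1)) in HM'; [|lra].
    field_simplify in HM'; lra. }
  pose proof (Rle_abs D).
  simpl in Hrem; rewrite Rmult_1_r in Hrem.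
  replace (g u v - g x y - (pd1 g x y * (u - x) + pd2 g x y * (v - y)))
    with (g u v - (g x y + (pd1 g x y * (u - x) + pd2 g x y * (v - y)))) by ring.
  nra.
Qed.

Definition ddir (g : R -> R -> R) (y h : vec) : R :=
  pd1 g (fst y) (snd y) * fst h + pd2 g (fst y) (snd y) * snd h.

Lemma is_derive_Ck2_line g y h : Ck 2 g ->
  is_derive (fun t => g (fst y + t * fst h) (snd y + t * snd h)) 0 (ddir g y h).
Proof.
  intros Hg. apply is_derive_Reals.
  replace (ddir g y h) with (ddir g (vadd y (vscal 0 h)) h) by now rewrite vadd_scal0.
  apply (derivable_pt_lim_comp_2d g (fun t => fst y + t * fst h) (fun t => snd y + t * snd h)).
  - apply Ck2_differentiable, Hg.
  - apply is_derive_Reals. auto_derive; auto; ring.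
  - apply is_derive_Reals. auto_derive; auto; ring.
Qed.

Lemma ex_derive_ddir_line g y h k : Ck 3 g ->
  ex_derive (fun s => ddir g (vadd y (vscal s k)) h) 0.
Proof.
  intros [_ [_ [H1 H2]]]. unfold ddir; simpl.
  set (F1 := fun s => pd1 g (fst y + s * fst k) (snd y + s * snd k)).
  set (F2 := fun s => pd2 g (fst y + s * fst k) (snd y + s * snd k)).
  assert (E1 : ex_derive F1 0) by (eexists; apply is_derive_Ck2_line, H1).
  assert (E2 : ex_derive F2 0) by (eexists; apply is_derive_Ck2_line, H2).
  change (ex_derive (fun s => F1 s * fst h + F2 s * snd h) 0).
  eexists; auto_derive; auto.
Qed.

Definition is_derive_vec (c : R -> vec) (t0 : R) (l : vec) : Prop :=
  is_derive (fun t => fst (c t)) t0 (fst l) /\ is_derive (fun t => snd (c t)) t0 (snd l).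

Lemma Dcurve_is_derive_vec c l : is_derive_vec c 0 l -> Dcurve c = l.
Proof.
  intros [H1 H2]. destruct l. unfold Dcurve; f_equal; apply is_derive_unique; assumption.
Qed.

Lemma is_derive_vec_line y h t0 : is_derive_vec (fun t => vadd y (vscal t h)) t0 h.
Proof. split; simpl; auto_derive; auto; ring. Qed.

Section VectorField.

Variable w : vec -> vec.
Hypothesis w_C3 : C3field w.

Let w1 a b := fst (w (a, b)).
Let w2 a b := snd (w (a, b)).

Lemma is_derive_vec_w_ddir y h :
  is_derive_vec (fun t => w (vadd y (vscal t h))) 0 (ddir w1 y h, ddir w2 y h).
Proof.
  destruct w_C3 as [[_ [H1 _]] [_ [H2 _]]].
  split; apply is_derive_Ck2_line; assumption.
Qed.

Lemma Dw_ddir y h : Dw w y h = (ddir w1 y h, ddir w2 y h).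
Proof. apply Dcurve_is_derive_vec, is_derive_vec_w_ddir. Qed.

Lemma is_derive_vec_w_line y h :
  is_derive_vec (fun t => w (vadd y (vscal t h))) 0 (Dw w y h).
Proof. rewrite Dw_ddir. apply is_derive_vec_w_ddir. Qed.

Lemma is_derive_vec_Dw_line y h k :
  is_derive_vec (fun s => Dw w (vadd y (vscal s k)) h) 0 (D2w w y h k).
Proof.
  destruct w_C3 as [H1 H2].
  split; apply Derive_correct;
    (eapply ex_derive_ext; [intros s; rewrite Dw_ddir; reflexivity|]);
    apply ex_derive_ddir_line; assumption.
Qed.

End VectorField.

(** * Differentiation along curves *)

Lemma is_derive_eq (f : R -> R) x l1 l2 : is_derive f x l1 -> is_derive f x l2 -> l1 = l2.
Proof. intros H1 H2. rewrite <- (is_derive_unique _ _ _ H1). exact (is_derive_unique _ _ _ H2). Qed.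

Lemma is_derive_Rmult (f g : R -> R) x df dg : is_derive f x df -> is_derive g x dg ->
  is_derive (fun t => f t * g t) x (df * g x + f x * dg).
Proof. intros Hf Hg. apply (is_derive_mult f g); [exact Hf|exact Hg|apply Rmult_comm]. Qed.

Lemma is_derive_dot a b t0 da db : is_derive_vec a t0 da -> is_derive_vec b t0 db ->
  is_derive (fun t => dot (a t) (b t)) t0 (dot da (b t0) + dot (a t0) db).
Proof.
  intros [Ha1 Ha2] [Hb1 Hb2].
  replace (dot da (b t0) + dot (a t0) db)
    with ((fst da * fst (b t0) + fst (a t0) * fst db) + (snd da * snd (b t0) + snd (a t0) * snd db))
    by (unfold dot; ring).
  apply (is_derive_plus (fun t => fst (a t) * fst (b t)) (fun t => snd (a t) * snd (b t)));
    apply is_derive_Rmult; assumption.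
Qed.

Lemma is_derive_vec_const y t0 : is_derive_vec (fun _ => y) t0 (0, 0).
Proof. split; simpl; auto_derive; reflexivity. Qed.

Lemma is_derive_vec_sub a b t0 da db : is_derive_vec a t0 da -> is_derive_vec b t0 db ->
  is_derive_vec (fun t => vsub (a t) (b t)) t0 (vsub da db).
Proof.
  intros [Ha1 Ha2] [Hb1 Hb2].
  split; simpl;
    [apply (is_derive_minus (fun t => fst (a t)) (fun t => fst (b t)))
    |apply (is_derive_minus (fun t => snd (a t)) (fun t => snd (b t)))]; assumption.
Qed.

Lemma is_derive_vec_scal (T : R -> R) a t0 (dT : R) da :
  is_derive T t0 dT -> is_derive_vec a t0 da ->
  is_derive_vec (fun t => vscal (T t) (a t)) t0 (vadd (vscal dT (a t0)) (vscal (T t0) da)).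
Proof. intros HT [Ha1 Ha2]. split; apply is_derive_Rmult; assumption. Qed.

(** * The travel-time integrand *)

(* For [T = fcost V w x p], [relv p (w x) T] is [T] times the vehicle's velocity
   relative to the air. *)
Definition relv (p W : vec) (T : R) : vec := vsub p (vscal T W).
Definition denom (V : R) (p W : vec) (T : R) : R := dot (relv p W T) W + V ^ 2 * T.
Definition slope (V : R) (p W : vec) (T : R) (g : vec) : R := dot (relv p W T) g / denom V p W T.
Definition qform (V : R) (p W : vec) (T : R) (g h : vec) : R :=
  let sg := slope V p W T g in
  let sh := slope V p W T h in
  dot (vsub g (vscal sg W)) (vsub h (vscal sh W)) - V ^ 2 * sg * sh.

(* Closed form of the second derivative of [fcost] (see [D2f_eq]). *)
Definition d2fc (V : R) (W A B C p u' v' : vec) (T : R) : R :=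
  let gs := vsub u' (vscal T A) in
  let gt := vsub v' (vscal T B) in
  let E := relv p W T in
  (qform V p W T gs gt - slope V p W T gt * dot E A - slope V p W T gs * dot E B
   - T * dot E C) / denom V p W T.

Lemma fcost_pos V w x p : vnorm (w x) < V -> p <> (0, 0) -> 0 < fcost V w x p.
Proof.
  intros HW Hp. apply dot_lt_sq_of_vnorm_lt in HW. pose proof (dot_gt0 p Hp). unfold fcost.
  set (a := dot p (w x)). set (d := V ^ 2 - dot (w x) (w x)).
  assert (Hd : 0 < d) by (unfold d; lra).
  assert (Hs : Rabs a < sqrt (a ^ 2 + d * dot p p)).
  { rewrite <- sqrt_Rsqr_abs. apply sqrt_lt_1_alt. split; [apply Rle_0_sqr|unfold Rsqr; nra]. }
  apply Rdiv_lt_0_compat; [pose proof (Rle_abs a); lra|exact Hd].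
Qed.

(* [fcost] is the positive root of this quadratic equation in [T]. *)
Lemma fcost_relv_sq V w x p : vnorm (w x) < V ->
  let T := fcost V w x p in dot (relv p (w x) T) (relv p (w x) T) = V ^ 2 * T ^ 2.
Proof.
  intros HW T. apply dot_lt_sq_of_vnorm_lt in HW. unfold T, fcost.
  set (a := dot p (w x)). set (d := V ^ 2 - dot (w x) (w x)).
  assert (Hd : 0 < d) by (unfold d; lra).
  assert (Hsq : sqrt (a ^ 2 + d * dot p p) ^ 2 = a ^ 2 + d * dot p p).
  { apply pow2_sqrt. pose proof (dot_ge0 p). pose proof (pow2_ge_0 a). nra. }
  set (r := sqrt (a ^ 2 + d * dot p p)) in *.
  assert (Hrel : forall T', dot (relv p (w x) T') (relv p (w x) T')
                 = dot p p - 2 * T' * a + T' ^ 2 * (V ^ 2 - d)).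
  { intros T'. unfold relv, a, d, dot, vsub, vscal; simpl; ring. }
  rewrite Hrel.
  replace (dot p p) with ((r ^ 2 - a ^ 2) / d) by (rewrite Hsq; field; lra).
  field. lra.
Qed.

Section Estimates.

Variables (V c T : R) (p W : vec).
Hypotheses (V_pos : 0 < V) (c_lt_V : c < V) (T_pos : 0 < T) (W_le_c : vnorm W <= c)
  (relv_sq : dot (relv p W T) (relv p W T) = V ^ 2 * T ^ 2).

Let E := relv p W T.
Let D := denom V p W T.

Lemma vnorm_relv : vnorm E = V * T.
Proof.
  unfold vnorm. fold E in relv_sq. rewrite relv_sq.
  replace (V ^ 2 * T ^ 2) with ((V * T) ^ 2) by ring.
  apply sqrt_pow2. nra.
Qed.

Lemma denom_ge : V * T * (V - c) <= D.
Proof.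
  pose proof (Rabs_dot_le E W) as HEW. rewrite vnorm_relv in HEW.
  apply Rabs_le_between in HEW.
  assert (V * T * vnorm W <= V * T * c) by (apply Rmult_le_compat_l; nra).
  unfold D, denom. fold E. nra.
Qed.

Lemma denom_gt0 : 0 < D.
Proof.
  pose proof (vnorm_ge0 W). pose proof denom_ge.
  assert (0 < V * T * (V - c)) by (repeat apply Rmult_lt_0_compat; lra). lra.
Qed.

Lemma Rabs_slope_le g : Rabs (slope V p W T g) <= vnorm g / (V - c).
Proof.
  pose proof denom_ge. pose proof denom_gt0. pose proof (vnorm_ge0 W).
  pose proof (vnorm_ge0 g). pose proof (Rabs_dot_le E g) as HEg.
  rewrite vnorm_relv in HEg.
  unfold slope; fold E D. rewrite Rabs_div, (Rabs_pos_eq D) by lra.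
  apply Rle_div_l; [lra|].
  apply Rle_trans with (vnorm g / (V - c) * (V * T * (V - c))).
  - replace (vnorm g / (V - c) * (V * T * (V - c))) with (V * T * vnorm g) by (field; lra).
    lra.
  - apply Rmult_le_compat_l; [apply Rdiv_le_0_compat|]; lra.
Qed.

Lemma relv_dot_slope g : dot E (vsub g (vscal (slope V p W T g) W)) = V ^ 2 * T * slope V p W T g.
Proof.
  pose proof denom_gt0.
  unfold slope; fold E D. set (s := dot E g / D).
  assert (Hs : dot E g = s * D) by (unfold s; field; lra).
  transitivity (dot E g - s * dot E W); [unfold dot, vsub, vscal; simpl; ring|].
  rewrite Hs. unfold D, denom; fold E. ring.
Qed.

Lemma cross_relv_wind_le : (V ^ 2 - c ^ 2) * cross E W ^ 2 <= c ^ 2 * D ^ 2.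
Proof.
  pose proof (lagrange_identity E W W) as HL.
  rewrite <- vnorm_sq, vnorm_relv, <- vnorm_sq in HL.
  pose proof (vnorm_ge0 W).
  assert (vnorm W * vnorm W <= c * c) by nra.
  assert (HD : c ^ 2 * D ^ 2 - (V ^ 2 - c ^ 2) * (V ^ 2 * T ^ 2 * c ^ 2 - dot E W ^ 2)
               = V ^ 2 * (dot E W + c ^ 2 * T) ^ 2) by (unfold D, denom; fold E; ring).
  assert (0 <= V ^ 2 * (dot E W + c ^ 2 * T) ^ 2) by (apply Rmult_le_pos; apply pow2_ge_0).
  assert (0 <= V ^ 2 * T ^ 2) by (apply Rmult_le_pos; apply pow2_ge_0).
  assert (Hcross : cross E W ^ 2 <= V ^ 2 * T ^ 2 * c ^ 2 - dot E W ^ 2) by nra.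
  assert (0 < V ^ 2 - c ^ 2) by nra.
  apply Rmult_le_compat_l with (r := V ^ 2 - c ^ 2) in Hcross; lra.
Qed.

Lemma cross_relv_slope_le g :
  (V ^ 2 - c ^ 2) * cross E (vsub g (vscal (slope V p W T g) W)) ^ 2
  <= V ^ 2 * (V ^ 2 * T ^ 2) * dot g g.
Proof.
  pose proof denom_gt0. pose proof cross_relv_wind_le.
  assert (Hvl : 0 < V ^ 2 - c ^ 2) by (pose proof (vnorm_ge0 W); nra).
  unfold slope; fold E D. set (s := dot E g / D).
  set (al := cross E g). set (be := dot E g). set (om := cross E W).
  assert (Hcross : cross E (vsub g (vscal s W)) = al - s * om)
    by (unfold al, om, cross, vsub, vscal; simpl; ring).
  assert (Hs : D * (al - s * om) = D * al - be * om) by (unfold s, be; field; lra).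
  assert (Hsum : al ^ 2 + be ^ 2 = V ^ 2 * T ^ 2 * dot g g).
  { pose proof (lagrange_identity E g g). fold E in relv_sq. rewrite <- relv_sq. 
    unfold al, be. nra. }
  assert (Hprod : (D * al - be * om) ^ 2 <= (D ^ 2 + om ^ 2) * (al ^ 2 + be ^ 2)).
  { (* Brahmagupta–Fibonacci identity *)
    assert (HBF : (D * al - be * om) ^ 2 + (D * be + al * om) ^ 2
                  = (D ^ 2 + om ^ 2) * (al ^ 2 + be ^ 2)) by ring.
    pose proof (pow2_ge_0 (D * be + al * om)). lra. }
  rewrite Hcross.
  apply (Rmult_le_reg_l (D ^ 2)); [apply pow_lt; lra|].
  replace (D ^ 2 * ((V ^ 2 - c ^ 2) * (al - s * om) ^ 2))
    with ((V ^ 2 - c ^ 2) * (D * al - be * om) ^ 2) by (rewrite <- Hs; ring).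
  assert (HS : 0 <= al ^ 2 + be ^ 2) by nra.
  assert (Hwind : (V ^ 2 - c ^ 2) * (D ^ 2 + om ^ 2) <= V ^ 2 * D ^ 2) by (unfold om; nra).
  apply Rmult_le_compat_l with (r := V ^ 2 - c ^ 2) in Hprod; [|lra].
  apply Rmult_le_compat_r with (r := al ^ 2 + be ^ 2) in Hwind; [|lra].
  rewrite Hsum in Hprod, Hwind. nra.
Qed.

(* By Lagrange's identity, [V^2 T^2 qform g h] factors as a product of two cross products. *)
Lemma Rabs_qform_le g h :
  (V ^ 2 - c ^ 2) * Rabs (qform V p W T g h) <= V ^ 2 * vnorm g * vnorm h.
Proof.
  assert (Hvl : 0 < V ^ 2 - c ^ 2) by (pose proof (vnorm_ge0 W); nra).
  assert (HVT : 0 < V ^ 2 * T ^ 2) by (apply Rmult_lt_0_compat; apply pow_lt; lra).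
  pose proof (cross_relv_slope_le g) as Hg. pose proof (cross_relv_slope_le h) as Hh.
  unfold qform. set (sg := slope V p W T g) in *. set (sh := slope V p W T h) in *.
  set (a := vsub g (vscal sg W)) in *. set (b := vsub h (vscal sh W)) in *.
  set (Q := dot a b - V ^ 2 * sg * sh).
  assert (HQ : cross E a * cross E b = V ^ 2 * T ^ 2 * Q).
  { pose proof (lagrange_identity E a b) as HL.
    unfold a, b in HL. rewrite !relv_dot_slope in HL. fold a b E in HL.
    fold E in relv_sq. rewrite relv_sq in HL. unfold Q, sg, sh. lra. }
  rewrite <- (Rabs_pos_eq (V ^ 2 - c ^ 2)) at 1 by lra. rewrite <- Rabs_mult.
  assert (0 <= V ^ 2 * vnorm g * vnorm h).
  { pose proof (vnorm_ge0 g). pose proof (vnorm_ge0 h). pose proof (pow2_ge_0 V).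
    apply Rmult_le_pos; [apply Rmult_le_pos|]; assumption. }
  apply Rabs_le_of_sq; [assumption|].
  apply (Rmult_le_reg_l ((V ^ 2 * T ^ 2) ^ 2)); [apply pow_lt; lra|].
  pose proof (vnorm_sq g). pose proof (vnorm_sq h).
  assert (0 <= (V ^ 2 - c ^ 2) * cross E a ^ 2) by (apply Rmult_le_pos; [lra|apply pow2_ge_0]).
  assert (0 <= (V ^ 2 - c ^ 2) * cross E b ^ 2) by (apply Rmult_le_pos; [lra|apply pow2_ge_0]).
  replace ((V ^ 2 * T ^ 2) ^ 2 * ((V ^ 2 - c ^ 2) * Q * ((V ^ 2 - c ^ 2) * Q)))
    with ((V ^ 2 - c ^ 2) ^ 2 * (V ^ 2 * T ^ 2 * Q) ^ 2) by ring.
  rewrite <- HQ.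
  replace ((V ^ 2 - c ^ 2) ^ 2 * (cross E a * cross E b) ^ 2)
    with (((V ^ 2 - c ^ 2) * cross E a ^ 2) * ((V ^ 2 - c ^ 2) * cross E b ^ 2)) by ring.
  replace ((V ^ 2 * T ^ 2) ^ 2 * (V ^ 2 * vnorm g * vnorm h * (V ^ 2 * vnorm g * vnorm h)))
    with ((V ^ 2 * (V ^ 2 * T ^ 2) * (vnorm g * vnorm g))
          * (V ^ 2 * (V ^ 2 * T ^ 2) * (vnorm h * vnorm h))) by ring.
  rewrite !vnorm_sq.
  apply Rmult_le_compat; assumption.
Qed.

Lemma Rabs_d2fc_num_le A B C g h a b ab G H :
  vnorm A <= a -> vnorm B <= b -> vnorm C <= ab -> vnorm g <= G -> vnorm h <= H ->
  Rabs (qform V p W T g h - slope V p W T h * dot E A - slope V p W T g * dot E B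
        - T * dot E C)
  <= V ^ 2 / (V ^ 2 - c ^ 2) * G * H + V * T / (V - c) * (a * H + b * G) + V * T ^ 2 * ab.
Proof.
  intros HA HB HC Hg Hh.
  pose proof (vnorm_ge0 W). pose proof (vnorm_ge0 g). pose proof (vnorm_ge0 h).
  assert (Hvl : 0 < V ^ 2 - c ^ 2) by nra.
  assert (Hk : 0 < V - c) by lra.
  assert (HQ : Rabs (qform V p W T g h) <= V ^ 2 / (V ^ 2 - c ^ 2) * G * H).
  { pose proof (Rabs_qform_le g h).
    replace (V ^ 2 / (V ^ 2 - c ^ 2) * G * H) with (V ^ 2 * G * H / (V ^ 2 - c ^ 2))
      by (field; lra).
    apply Rle_div_r; [lra|]. rewrite Rmult_comm. eapply Rle_trans; [eassumption|].
    pose proof (pow2_ge_0 V).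
    apply Rmult_le_compat; [apply Rmult_le_pos| |apply Rmult_le_compat_l|]; assumption. }
  assert (Hslope : forall g' G', vnorm g' <= G' -> Rabs (slope V p W T g') <= G' / (V - c)).
  { intros g' G' Hg'. eapply Rle_trans; [apply Rabs_slope_le|].
    apply Rmult_le_compat_r; [left; apply Rinv_0_lt_compat; lra|exact Hg']. }
  assert (Hdot : forall X x, vnorm X <= x -> Rabs (dot E X) <= V * T * x).
  { intros X x HX. eapply Rle_trans; [apply Rabs_dot_le|]. rewrite vnorm_relv.
    apply Rmult_le_compat_l; [nra|exact HX]. }
  pose proof (Hslope g G Hg). pose proof (Hslope h H Hh).
  pose proof (Hdot A a HA). pose proof (Hdot B b HB). pose proof (Hdot C ab HC).
  replace (V ^ 2 / (V ^ 2 - c ^ 2) * G * H + V * T / (V - c) * (a * H + b * G) + V * T ^ 2 * ab)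
    with (V ^ 2 / (V ^ 2 - c ^ 2) * G * H + H / (V - c) * (V * T * a)
          + G / (V - c) * (V * T * b) + T * (V * T * ab)) by (field; lra).
  unfold Rminus. eapply Rle_trans; [apply Rabs_triang|].
  rewrite Rabs_Ropp, Rabs_mult, (Rabs_pos_eq T) by lra.
  eapply Rle_trans; [apply Rplus_le_compat_r, Rabs_triang|].
  rewrite Rabs_Ropp, Rabs_mult.
  eapply Rle_trans; [apply Rplus_le_compat_r, Rplus_le_compat_r, Rabs_triang|].
  rewrite Rabs_Ropp, Rabs_mult.
  repeat apply Rplus_le_compat; try assumption;
    apply Rmult_le_compat; auto using Rabs_pos; lra.
Qed.

Lemma Rabs_d2fc_le A B C u' v' a b ab :
  vnorm A <= a -> vnorm B <= b -> vnorm C <= ab ->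
  let Gs := vnorm u' + T * a in
  let Gt := vnorm v' + T * b in
  Rabs (d2fc V W A B C p u' v' T)
  <= V ^ 2 / (V ^ 2 - c ^ 2) * Gs * Gt / (V * T * (V - c))
     + (a * Gt + b * Gs) / (V - c) ^ 2 + T * ab / (V - c).
Proof.
  intros HA HB HC Gs Gt.
  pose proof denom_ge. pose proof denom_gt0. pose proof (vnorm_ge0 W).
  assert (HVTk : 0 < V * T * (V - c)) by (repeat apply Rmult_lt_0_compat; lra).
  pose proof (Rle_trans _ _ _ (vnorm_ge0 A) HA). pose proof (Rle_trans _ _ _ (vnorm_ge0 B) HB).
  assert (HN := Rabs_d2fc_num_le A B C (vsub u' (vscal T A)) (vsub v' (vscal T B)) a b ab Gs Gt
                  HA HB HC ltac:(apply vnorm_sub_scal_le; lra) ltac:(apply vnorm_sub_scal_le; lra)).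
  set (M := V ^ 2 / (V ^ 2 - c ^ 2) * Gs * Gt + V * T / (V - c) * (a * Gt + b * Gs)
            + V * T ^ 2 * ab) in HN.
  assert (HM : 0 <= M) by (eapply Rle_trans; [apply Rabs_pos|exact HN]).
  replace (V ^ 2 / (V ^ 2 - c ^ 2) * Gs * Gt / (V * T * (V - c))
           + (a * Gt + b * Gs) / (V - c) ^ 2 + T * ab / (V - c))
    with (M / (V * T * (V - c))) by (unfold M; field; nra).
  unfold d2fc. fold E D. rewrite Rabs_div, (Rabs_pos_eq D) by lra.
  apply Rle_trans with (M / D).
  - apply Rmult_le_compat_r; [left; apply Rinv_0_lt_compat|]; lra.
  - apply Rmult_le_compat_l; [lra|]. apply Rinv_le_contravar; lra.
Qed.

Lemma vnorm_p_between : T * (V - c) <= vnorm p <= T * (V + c).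
Proof.
  assert (HTW : vnorm (vscal T W) <= T * c).
  { rewrite vnorm_scal, Rabs_pos_eq by lra. apply Rmult_le_compat_l; lra. }
  pose proof vnorm_relv as HE.
  pose proof (vnorm_sub_le p (vscal T W)) as Hle. change (vsub p (vscal T W)) with E in Hle.
  pose proof (vnorm_add_le E (vscal T W)) as Hge.
  replace (vadd E (vscal T W)) with p in Hge
    by (unfold E, relv, vadd, vsub; destruct p; simpl; f_equal; ring).
  split; lra.
Qed.

End Estimates.

Lemma is_derive_vec_relv q W (T : R -> R) dq dW (dT : R) t0 :
  is_derive_vec q t0 dq -> is_derive_vec W t0 dW -> is_derive T t0 dT ->
  is_derive_vec (fun t => relv (q t) (W t) (T t)) t0
    (vsub dq (vadd (vscal dT (W t0)) (vscal (T t0) dW))).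
Proof. intros Hq HW HT. apply is_derive_vec_sub, is_derive_vec_scal; assumption. Qed.

Lemma is_derive_denom V q W (T : R -> R) dq dW (dT : R) t0 :
  is_derive_vec q t0 dq -> is_derive_vec W t0 dW -> is_derive T t0 dT ->
  is_derive (fun t => denom V (q t) (W t) (T t)) t0
    (dot (vsub dq (vadd (vscal dT (W t0)) (vscal (T t0) dW))) (W t0)
     + dot (relv (q t0) (W t0) (T t0)) dW + V ^ 2 * dT).
Proof.
  intros Hq HW HT.
  pose proof (is_derive_dot _ _ _ _ _ (is_derive_vec_relv q W T dq dW dT t0 Hq HW HT) HW) as H1.
  pose proof (is_derive_scal T t0 (V ^ 2) dT HT) as H2.
  exact (is_derive_plus _ _ _ _ _ H1 H2).
Qed.

Lemma is_derive_implicit V (q W : R -> vec) (T : R -> R) (dq dW : vec) (dT : R) :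
  is_derive_vec q 0 dq -> is_derive_vec W 0 dW -> is_derive T 0 dT ->
  (forall t, dot (relv (q t) (W t) (T t)) (relv (q t) (W t) (T t)) = V ^ 2 * T t ^ 2) ->
  denom V (q 0) (W 0) (T 0) <> 0 ->
  dT = slope V (q 0) (W 0) (T 0) (vsub dq (vscal (T 0) dW)).
Proof.
  intros Hq HW HT Hid HD.
  pose proof (is_derive_vec_relv q W T dq dW dT 0 Hq HW HT) as HE.
  pose proof (is_derive_dot _ _ _ _ _ HE HE) as Hlhs.
  assert (Hsq : forall t, dot (relv (q t) (W t) (T t)) (relv (q t) (W t) (T t))
                          = V ^ 2 * (T t * T t)) by (intros t; rewrite Hid; ring).
  apply (is_derive_ext _ _ _ _ Hsq) in Hlhs.
  assert (Hrhs : is_derive (fun t => V ^ 2 * (T t * T t)) 0 (V ^ 2 * (dT * T 0 + T 0 * dT)))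
    by (apply is_derive_scal, is_derive_Rmult; assumption).
  pose proof (is_derive_eq _ _ _ _ Hlhs Hrhs) as E1.
  assert (Hlin : dT * denom V (q 0) (W 0) (T 0)
                 = dot (relv (q 0) (W 0) (T 0)) (vsub dq (vscal (T 0) dW))).
  { revert E1. unfold denom, relv, dot, vsub, vscal, vadd; simpl. intros. lra. }
  unfold slope. rewrite <- Hlin. field. exact HD.
Qed.

Lemma is_derive_slope_curve V W B q (T : R -> R) A C u' v' :
  is_derive_vec W 0 A -> is_derive_vec B 0 C -> is_derive_vec q 0 u' ->
  is_derive T 0 (slope V (q 0) (W 0) (T 0) (vsub u' (vscal (T 0) A))) ->
  denom V (q 0) (W 0) (T 0) <> 0 ->
  is_derive (fun s => slope V (q s) (W s) (T s) (vsub v' (vscal (T s) (B s)))) 0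
    (d2fc V (W 0) A (B 0) C (q 0) u' v' (T 0)).
Proof.
  intros HW HB Hq HT HD.
  set (Ts := slope V (q 0) (W 0) (T 0) (vsub u' (vscal (T 0) A))) in HT.
  pose proof (is_derive_vec_sub _ _ _ _ _ (is_derive_vec_const v' 0)
                (is_derive_vec_scal _ _ _ _ _ HT HB)) as Hg.
  pose proof (is_derive_dot _ _ _ _ _ (is_derive_vec_relv _ _ _ _ _ _ 0 Hq HW HT) Hg) as Hnum.
  pose proof (is_derive_denom V _ _ _ _ _ _ 0 Hq HW HT) as Hden.
  pose proof (is_derive_div _ _ _ _ _ Hnum Hden HD) as Hquot.
  match type of Hquot with
  | is_derive _ _ ?l => replace (d2fc V (W 0) A (B 0) C (q 0) u' v' (T 0)) with l; [exact Hquot|]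
  end.
  revert HD. unfold Ts, d2fc, qform, slope, denom, relv, dot, vsub, vscal, vadd; simpl.
  intros HD. field. contradict HD. lra.
Qed.

Lemma ex_derive_fcost_line V w x h p h' : C3field w ->
  vnorm (w x) < V -> p <> (0, 0) ->
  ex_derive (fun t => fcost V w (vadd x (vscal t h)) (vadd p (vscal t h'))) 0.
Proof.
  intros Hw HWV Hp.
  destruct (is_derive_vec_w_line w Hw x h) as [H1 H2].
  set (w1 := fun t => fst (w (vadd x (vscal t h)))) in H1.
  set (w2 := fun t => snd (w (vadd x (vscal t h)))) in H2.
  assert (E1 : ex_derive w1 0) by (eexists; exact H1).
  assert (E2 : ex_derive w2 0) by (eexists; exact H2).
  pose proof (dot_lt_sq_of_vnorm_lt _ _ HWV) as HW. pose proof (dot_gt0 p Hp) as Hpp.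
  rewrite <- (vadd_scal0 x h) in HW. destruct p as [p1 p2].
  change (ex_derive (fun t =>
    (- ((p1 + t * fst h') * w1 t + (p2 + t * snd h') * w2 t)
     + sqrt (((p1 + t * fst h') * w1 t + (p2 + t * snd h') * w2 t) ^ 2
             + (V ^ 2 - (w1 t * w1 t + w2 t * w2 t))
               * ((p1 + t * fst h') * (p1 + t * fst h') + (p2 + t * snd h') * (p2 + t * snd h'))))
    / (V ^ 2 - (w1 t * w1 t + w2 t * w2 t))) 0).
  unfold dot in HW, Hpp; simpl in Hpp. fold (w1 0) (w2 0) in HW.
  auto_derive. repeat split; auto; try lra.
  rewrite !Rmult_0_l, !Rplus_0_r.
  pose proof (pow2_ge_0 (p1 * w1 0 + p2 * w2 0)). nra.
Qed.

Lemma fcost_denom_gt0 V w x p : 0 < V -> vnorm (w x) < V -> p <> (0, 0) ->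
  0 < denom V p (w x) (fcost V w x p).
Proof.
  intros HV HW Hp.
  apply (denom_gt0 V (vnorm (w x))); auto using fcost_pos, fcost_relv_sq, Rle_refl.
Qed.

Lemma is_derive_fcost_line V w x h p h' : 0 < V -> C3field w ->
  (forall y, vnorm (w y) < V) -> p <> (0, 0) ->
  let T := fcost V w x p in
  is_derive (fun t => fcost V w (vadd x (vscal t h)) (vadd p (vscal t h'))) 0
    (slope V p (w x) T (vsub h' (vscal T (Dw w x h)))).
Proof.
  intros HV Hw HWV Hp T.
  set (F := fun t => fcost V w (vadd x (vscal t h)) (vadd p (vscal t h'))).
  pose proof (Derive_correct F 0 (ex_derive_fcost_line V w x h p h' Hw (HWV x) Hp)) as HF.
  replace (slope V p (w x) T (vsub h' (vscal T (Dw w x h)))) with (Derive F 0); [exact HF|].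
  assert (HF0 : F 0 = T) by (unfold F, T; rewrite !vadd_scal0; reflexivity).
  rewrite (is_derive_implicit V (fun t => vadd p (vscal t h')) (fun t => w (vadd x (vscal t h))) F
             h' (Dw w x h) (Derive F 0)); cbv beta.
  - rewrite HF0, !vadd_scal0. reflexivity.
  - apply is_derive_vec_line.
  - apply is_derive_vec_w_line, Hw.
  - exact HF.
  - intros t. apply fcost_relv_sq, HWV.
  - rewrite HF0, !vadd_scal0. apply Rgt_not_eq, fcost_denom_gt0; auto.
Qed.

Lemma locally_line_nonzero p h : p <> (0, 0) ->
  locally 0 (fun s => vadd p (vscal s h) <> (0, 0)).
Proof.
  intros Hp.
  set (g := fun s => dot (vadd p (vscal s h)) (vadd p (vscal s h))).
  assert (Hg : continuous g 0).
  { apply (ex_derive_continuous (V := R_NormedModule)).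
    unfold g, dot, vadd, vscal; simpl. auto_derive. exact I. }
  assert (Hg0 : 0 < g 0) by (unfold g; rewrite vadd_scal0; apply dot_gt0, Hp).
  apply (filter_imp (fun s => 0 < g s)).
  - intros s Hs Hzero. unfold g in Hs. rewrite Hzero in Hs. unfold dot in Hs; simpl in Hs. lra.
  - apply (Hg (fun y => 0 < y)), open_gt, Hg0.
Qed.

Lemma D2f_eq V w x p u u' v v' : 0 < V -> C3field w ->
  (forall y, vnorm (w y) < V) -> p <> (0, 0) ->
  D2f V w x p u u' v v'
  = d2fc V (w x) (Dw w x u) (Dw w x v) (D2w w x v u) p u' v' (fcost V w x p).
Proof.
  intros HV Hw HWV Hp. unfold D2f.
  set (T := fun s => fcost V w (vadd x (vscal s u)) (vadd p (vscal s u'))).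
  rewrite (Derive_ext_loc _ (fun s => slope V (vadd p (vscal s u')) (w (vadd x (vscal s u))) (T s)
             (vsub v' (vscal (T s) (Dw w (vadd x (vscal s u)) v))))).
  2:{ generalize (locally_line_nonzero p u' Hp). apply filter_imp. intros s Hs.
      rewrite (Derive_ext _ (fun t => fcost V w (vadd (vadd x (vscal s u)) (vscal t v))
                                        (vadd (vadd p (vscal s u')) (vscal t v'))))
        by (intros t; rewrite !vadd_assoc; reflexivity).
      apply is_derive_unique, is_derive_fcost_line; assumption. }
  apply is_derive_unique.
  pose proof (is_derive_slope_curve V (fun s => w (vadd x (vscal s u)))
               (fun s => Dw w (vadd x (vscal s u)) v) (fun s => vadd p (vscal s u')) T
               (Dw w x u) (D2w w x v u) u' v') as H.
  assert (HT0 : T 0 = fcost V w x p) by (unfold T; rewrite !vadd_scal0; reflexivity).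
  cbv beta in H. rewrite !vadd_scal0, HT0 in H.
  apply H.
  - apply is_derive_vec_w_line, Hw.
  - apply is_derive_vec_Dw_line, Hw.
  - apply is_derive_vec_line.
  - apply is_derive_fcost_line; assumption.
  - apply Rgt_not_eq, fcost_denom_gt0; auto.
Qed.

(** * The constants *)

Section Constants.

Variables V c vl : R.
Hypotheses (V_pos : 0 < V) (c_ge0 : 0 <= c) (c_small : 5 * c ^ 2 <= V ^ 2)
  (vl_pos : 0 < vl) (vl_sq : vl * vl = V ^ 2 - c ^ 2).

Lemma c_le_045 : c <= 0.45 * V.
Proof. nra. Qed.

Lemma vl_sq_factor : vl * vl = (V - c) * (V + c).
Proof. rewrite vl_sq. ring. Qed.

Lemma vl_le_1625 : vl <= 1.625 * (V - c).
Proof. pose proof c_le_045. pose proof vl_sq_factor. nra. Qed.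

Lemma beta2_ineq : V * (V + c) <= 4 * vl * (V - c).
Proof. pose proof c_le_045. pose proof vl_sq_factor. nra. Qed.

Lemma beta1_ineq : V * (V - c) + vl * vl <= 7 * (V - c) ^ 2.
Proof. pose proof c_le_045. pose proof vl_sq_factor. nra. Qed.

Lemma beta0_ineq_c1 : V * vl * (V - c) + 2 * vl ^ 3 <= 14 * (V - c) ^ 3.
Proof.
  pose proof c_le_045. pose proof vl_le_1625.
  assert (V * vl * (V - c) <= (1.82 * (V - c)) * (1.625 * (V - c)) * (V - c)).
  { apply Rmult_le_compat_r; [lra|]. apply Rmult_le_compat; lra. }
  assert (vl ^ 3 <= (1.625 * (V - c)) ^ 3) by (apply pow_incr; lra).
  nra.
Qed.

Lemma beta0_ineq_c2 : vl * vl <= 4 * (V - c) ^ 2.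
Proof. pose proof c_le_045. pose proof vl_sq_factor. nra. Qed.

Lemma coef_beta2_le T n : 0 < T -> 0 < n -> n <= T * (V + c) ->
  V / (vl * vl * T * (V - c)) <= 4 / vl / n.
Proof.
  intros HT Hn HnT. pose proof c_le_045. pose proof beta2_ineq.
  assert (Hden : 0 < vl * vl * T * (V - c)) by (repeat apply Rmult_lt_0_compat; lra).
  apply Rle_div_l; [lra|].
  replace (4 / vl / n * (vl * vl * T * (V - c))) with (4 * vl * (V - c) * T / n) by (field; lra).
  apply Rle_div_r; [lra|]. nra.
Qed.

Lemma coef_beta1_le c1 : 0 <= c1 ->
  V * c1 / (vl * vl * (V - c)) + c1 / (V - c) ^ 2 <= 7 * c1 / vl ^ 2.
Proof.
  intros Hc1. pose proof c_le_045. pose proof beta1_ineq.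
  replace (V * c1 / (vl * vl * (V - c)) + c1 / (V - c) ^ 2)
    with (c1 * (V * (V - c) + vl * vl) / (vl ^ 2 * (V - c) ^ 2)) by (field; lra).
  replace (7 * c1 / vl ^ 2) with (c1 * (7 * (V - c) ^ 2) / (vl ^ 2 * (V - c) ^ 2)) by (field; lra).
  apply Rmult_le_compat_r; [left; apply Rinv_0_lt_compat, Rmult_lt_0_compat; apply pow_lt; lra|].
  apply Rmult_le_compat_l; lra.
Qed.

Lemma coef_beta0_le T n c1 c2 : 0 < T -> T * (V - c) <= n -> 0 <= c1 -> 0 <= c2 ->
  T * (V * c1 ^ 2 / (vl * vl * (V - c)) + 2 * c1 ^ 2 / (V - c) ^ 2 + c2 / (V - c))
  <= (14 * c1 ^ 2 / vl ^ 3 + 4 * c2 / vl ^ 2) * n.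
Proof.
  intros HT Hn Hc1 Hc2. pose proof c_le_045. pose proof beta0_ineq_c1. pose proof beta0_ineq_c2.
  assert (Hk : 0 < V - c) by lra.
  assert (HTn : T <= n / (V - c)) by (apply Rle_div_r; lra).
  assert (Hcoef : 0 <= V * c1 ^ 2 / (vl * vl * (V - c)) + 2 * c1 ^ 2 / (V - c) ^ 2 + c2 / (V - c)).
  { pose proof (pow2_ge_0 c1).
    repeat apply Rplus_le_le_0_compat; apply Rdiv_le_0_compat; try nra;
      try apply pow_lt; repeat apply Rmult_lt_0_compat; lra. }
  apply Rle_trans with (n / (V - c)
    * (V * c1 ^ 2 / (vl * vl * (V - c)) + 2 * c1 ^ 2 / (V - c) ^ 2 + c2 / (V - c))).
  { apply Rmult_le_compat_r; assumption. }
  replace (n / (V - c)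
           * (V * c1 ^ 2 / (vl * vl * (V - c)) + 2 * c1 ^ 2 / (V - c) ^ 2 + c2 / (V - c)))
    with ((c1 ^ 2 * ((V * vl * (V - c) + 2 * vl ^ 3) / (vl ^ 3 * (V - c) ^ 3))
           + c2 * (vl * vl / (vl ^ 2 * (V - c) ^ 2))) * n) by (field; lra).
  replace (14 * c1 ^ 2 / vl ^ 3 + 4 * c2 / vl ^ 2)
    with (c1 ^ 2 * (14 / vl ^ 3) + c2 * (4 / vl ^ 2)) by (field; lra).
  apply Rmult_le_compat_r; [nra|].
  apply Rplus_le_compat; (apply Rmult_le_compat_l; [nra|]).
  - apply Rle_div_l; [apply Rmult_lt_0_compat; apply pow_lt; lra|].
    replace (14 / vl ^ 3 * (vl ^ 3 * (V - c) ^ 3)) with (14 * (V - c) ^ 3) by (field; lra). lra.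
  - apply Rle_div_l; [apply Rmult_lt_0_compat; apply pow_lt; lra|].
    replace (4 / vl ^ 2 * (vl ^ 2 * (V - c) ^ 2)) with (4 * (V - c) ^ 2) by (field; lra). lra.
Qed.

Lemma d2fc_bound_le_beta T n c1 c2 x y x' y' :
  0 < T -> T * (V - c) <= n -> n <= T * (V + c) -> 0 <= c1 -> 0 <= c2 ->
  0 <= x -> 0 <= y -> 0 <= x' -> 0 <= y' ->
  let Gs := x' + T * (c1 * x) in
  let Gt := y' + T * (c1 * y) in
  V ^ 2 / (V ^ 2 - c ^ 2) * Gs * Gt / (V * T * (V - c))
  + (c1 * x * Gt + c1 * y * Gs) / (V - c) ^ 2 + T * (c2 * y * x) / (V - c)
  <= (14 * c1 ^ 2 / vl ^ 3 + 4 * c2 / vl ^ 2) * n * x * y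
     + 7 * c1 / vl ^ 2 * (x * y' + x' * y) + 4 / vl / n * x' * y'.
Proof.
  intros HT Hn1 Hn2 Hc1 Hc2 Hx Hy Hx' Hy' Gs Gt.
  pose proof c_le_045.
  assert (Hn : 0 < n) by nra.
  pose proof (coef_beta2_le T n HT Hn Hn2) as H1.
  pose proof (coef_beta1_le c1 Hc1) as H2.
  pose proof (coef_beta0_le T n c1 c2 HT Hn1 Hc1 Hc2) as H3.
  rewrite <- vl_sq. unfold Gs, Gt.
  replace (V ^ 2 / (vl * vl) * (x' + T * (c1 * x)) * (y' + T * (c1 * y)) / (V * T * (V - c))
           + (c1 * x * (y' + T * (c1 * y)) + c1 * y * (x' + T * (c1 * x))) / (V - c) ^ 2
           + T * (c2 * y * x) / (V - c))
    with (V / (vl * vl * T * (V - c)) * (x' * y')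
          + (V * c1 / (vl * vl * (V - c)) + c1 / (V - c) ^ 2) * (x * y' + x' * y)
          + T * (V * c1 ^ 2 / (vl * vl * (V - c)) + 2 * c1 ^ 2 / (V - c) ^ 2 + c2 / (V - c))
            * (x * y)) by (field; lra).
  apply Rmult_le_compat_r with (r := x' * y') in H1; [|nra].
  apply Rmult_le_compat_r with (r := x * y' + x' * y) in H2; [|nra].
  apply Rmult_le_compat_r with (r := x * y) in H3; [|nra].
  lra.
Qed.

End Constants.

Lemma sq_le_of_le_div_sqrt5 c V : 0 <= c -> c <= V / sqrt 5 -> 5 * c ^ 2 <= V ^ 2.
Proof.
  intros Hc HcV. pose proof (sqrt_lt_R0 5 ltac:(lra)). pose proof (sqrt_sqrt 5 ltac:(lra)).
  apply Rle_div_r in HcV; [|lra].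
  assert (0 <= c * sqrt 5) by nra. nra.
Qed.

Lemma Rabs_d2fc_le_beta V c c1 c2 T (p W A B C u u' v v' : vec) :
  0 < V -> 0 <= c -> 5 * c ^ 2 <= V ^ 2 -> 0 <= c1 -> 0 <= c2 -> 0 < T -> vnorm W <= c ->
  dot (relv p W T) (relv p W T) = V ^ 2 * T ^ 2 ->
  vnorm A <= c1 * vnorm u -> vnorm B <= c1 * vnorm v -> vnorm C <= c2 * vnorm v * vnorm u ->
  let vl := sqrt (V ^ 2 - c ^ 2) in
  Rabs (d2fc V W A B C p u' v' T)
  <= (14 * c1 ^ 2 / vl ^ 3 + 4 * c2 / vl ^ 2) * vnorm p * vnorm u * vnorm v
     + 7 * c1 / vl ^ 2 * (vnorm u * vnorm v' + vnorm u' * vnorm v)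
     + 4 / vl / vnorm p * vnorm u' * vnorm v'.
Proof.
  intros HV Hc H5 Hc1 Hc2 HT HW Hrel HA HB HC vl.
  assert (HV2 : 0 < V ^ 2) by (apply pow_lt; lra).
  assert (Hvl : 0 < vl) by (apply sqrt_lt_R0; lra).
  assert (Hvl2 : vl * vl = V ^ 2 - c ^ 2) by (apply sqrt_sqrt; lra).
  assert (HcV : c < V) by (apply Rsqr_incrst_0; [unfold Rsqr; simpl in *; lra|lra|lra]).
  destruct (vnorm_p_between V c T p W) as [Hp1 Hp2]; try assumption.
  eapply Rle_trans.
  { apply (Rabs_d2fc_le V c T p W)
      with (a := c1 * vnorm u) (b := c1 * vnorm v) (ab := c2 * vnorm v * vnorm u); assumption. }
  apply (d2fc_bound_le_beta V c vl); auto using vnorm_ge0.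
Qed.

Theorem lemma12 (vbar : R) (xO xD : vec) (w : vec -> vec) (a c0 c1 c2 : R) :
  0 < vbar ->
  xO <> xD ->
  C3field w ->
  (forall x, vnorm (w x) < vbar) ->
  vnorm (vsub xO xD) < 2 * a ->
  (forall x, ellipse xO xD a x -> vnorm (w x) <= c0) ->
  c0 <= vbar / sqrt 5 ->
  (forall x h, ellipse xO xD a x -> vnorm (Dw w x h) <= c1 * vnorm h) ->
  (forall x h k, ellipse xO xD a x ->
     vnorm (D2w w x h k) <= c2 * vnorm h * vnorm k) ->
  let vl := sqrt (vbar ^ 2 - c0 ^ 2) in
  let beta0 := 14 * c1 ^ 2 / vl ^ 3 + 4 * c2 / vl ^ 2 in
  let beta1 := 7 * c1 / vl ^ 2 in
  let beta2 := 4 / vl in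
  forall x p u u' v v' : vec,
    ellipse xO xD a x -> p <> (0, 0) ->
    Rabs (D2f vbar w x p u u' v v')
      <= beta0 * vnorm p * vnorm u * vnorm v
         + beta1 * (vnorm u * vnorm v' + vnorm u' * vnorm v)
         + beta2 / vnorm p * vnorm u' * vnorm v'.
Proof.
  (* The ellipse only localises the bounds on [w]. *)
  intros HV _ Hw HWV _ Hc0 Hc0V Hc1 Hc2 vl beta0 beta1 beta2 x p u u' v v' Hx Hp.
  assert (He1 : vnorm (1, 0) = 1)
    by (unfold vnorm, dot; simpl; replace (1 * 1 + 0 * 0) with 1 by ring; apply sqrt_1).
  assert (Hc0pos : 0 <= c0) by (eapply Rle_trans; [apply vnorm_ge0|exact (Hc0 x Hx)]).
  assert (Hc1pos : 0 <= c1).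
  { pose proof (Hc1 x (1, 0) Hx). pose proof (vnorm_ge0 (Dw w x (1, 0))). rewrite He1 in *. lra. }
  assert (Hc2pos : 0 <= c2).
  { pose proof (Hc2 x (1, 0) (1, 0) Hx). pose proof (vnorm_ge0 (D2w w x (1, 0) (1, 0))).
    rewrite He1 in *. lra. }
  rewrite D2f_eq by assumption.
  apply Rabs_d2fc_le_beta; auto using fcost_pos, fcost_relv_sq, sq_le_of_le_div_sqrt5.
Qed.
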